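(* For any graph $G = (V,E)$ we have \[ \operatorname{pn}_\ell(G) \geq \max\left\{ \frac{|E(H)|}{2|V(H)|-3} \;\middle|\; H \subseteq G,\ H \neq \emptyset\right\}. \]
   Context: All graphs are finite and simple; $H \subseteq G$ ranges over nonempty subgraphs of $G$. A linear embedding of $G=(V,E)$ is a pair $(\prec,\mathcal{P})$ where $\prec$ is a total ordering of $V$ and $\mathcal{P}$ is a partition of $E$ into parts called pages. Two edges $uv, xy$ with $u\prec v$, $x \prec y$ cross if $u \prec x \prec v \prec y$ or $x \prec u \prec y \prec v$. A book embedding is a linear embedding in which no two crossing edges lie on the same page. For a book embedding and a vertex $v$, let $\mathcal{P}_v$ be the set of pages containing at least one edge incident to $v$; the embedding is $k$-local if $|\mathcal{P}_v| \le k$ for all $v$. The local page number $\operatorname{pn}_\ell(G)$ is the smallest $k$ such that $G$ admits a $k$-local book embedding (with any number of pages). *)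

From mathcomp Require Import all_boot all_order all_algebra.
From mathcomp Require Import zify.
From Stdlib Require Import ClassicalEpsilon.
Set Implicit Arguments. Unset Strict Implicit. Unset Printing Implicit Defensive.

(* A (finite simple) graph is given by a vertex type T : finType and an
   adjacency relation e : rel T (assumed symmetric and irreflexive where
   needed). *)
Definition edges (T : finType) (e : rel T) : {set {set T}} :=
  [set [set p.1; p.2] | p in [set p : T * T | e p.1 p.2]].

(* A linear embedding: an injective map ord : T -> nat (giving the total
   order u < v iff ord u < ord v) together with a page assignment
   pg : T -> T -> nat on edges (pg u v = pg v u, i.e. a function of the
   unordered edge {u,v}); the pages are the nonempty fibres of pg, so pg
   encodes an arbitrary partition of the edge set (any number of pages). *)
Definition crosses (T : Type) (ord : T -> nat) (u v x y : T) : bool :=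
  ((ord u < ord x) && (ord x < ord v) && (ord v < ord y)) ||
  ((ord x < ord u) && (ord u < ord y) && (ord y < ord v)).

Definition is_book_embedding (T : finType) (e : rel T)
    (ord : T -> nat) (pg : T -> T -> nat) : Prop :=
  [/\ injective ord,
      (forall u v, e u v -> pg u v = pg v u) &
      (forall u v x y, e u v -> e x y -> ord u < ord v -> ord x < ord y ->
          crosses ord u v x y -> pg u v != pg x y)].

Definition pages_at (T : finType) (e : rel T) (pg : T -> T -> nat) (v : T)
  : seq nat := undup [seq pg v w | w <- enum T & e v w].

Definition is_k_local (T : finType) (e : rel T) (k : nat) : Prop :=
  exists (ord : T -> nat) (pg : T -> T -> nat),
    is_book_embedding e ord pg /\ forall v, size (pages_at e pg v) <= k.

Lemma k_local_exists (T : finType) (e : rel T) : exists k, is_k_local e k.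
Proof.
exists #|T|.
pose N := #|T|.
pose r : T -> nat := fun x => enum_rank x.
have rlt : forall x, r x < N by move=> x; rewrite /r /N ltn_ord.
exists r, (fun u v => minn (r u) (r v) * N + maxn (r u) (r v)).
split; last first.
  move=> v; rewrite /pages_at.
  apply: leq_trans (size_undup _) _.
  rewrite size_map size_filter.
  by apply: leq_trans (count_size _ _) _; rewrite -cardE.
split.
- by move=> x y H; apply: enum_rank_inj; apply: ord_inj.
- by move=> u v _; rewrite minnC maxnC.
- move=> u v x y _ _ huv hxy hc; apply/eqP.
  rewrite (minn_idPl (ltnW huv)) (maxn_idPr (ltnW huv)).
  rewrite (minn_idPl (ltnW hxy)) (maxn_idPr (ltnW hxy)) => E.
  have N0 : 0 < N by apply: leq_ltn_trans (rlt u).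
  have : (r u * N + r v) %/ N = (r x * N + r y) %/ N by rewrite E.
  rewrite !divnMDl // !divn_small ?rlt // !addn0 => Eux.
  by move: hc Eux; rewrite /crosses /r; lia.
Qed.

Definition k_local_pred (T : finType) (e : rel T) : pred nat :=
  fun k => if excluded_middle_informative (is_k_local e k) then true else false.

Lemma k_local_pred_exists (T : finType) (e : rel T) : exists k, k_local_pred e k.
Proof.
have [k Hk] := k_local_exists e; exists k; rewrite /k_local_pred.
by case: excluded_middle_informative.
Qed.

Definition local_pn (T : finType) (e : rel T) : nat :=
  ex_minn (k_local_pred_exists e).

(* On one page the edges form a family S of pairwise non-crossing arcs, and
   |S| <= 2 |V(S)| - 3 where V(S) is the set of their endpoints: charge an arc
   that is the longest one leaving its left endpoint to that left endpoint
   (never the rightmost vertex), and any other arc to its right endpoint; the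
   latter charging is injective because two such arcs with a common right
   endpoint would cross, and it misses both the leftmost and the rightmost
   vertex.  Summing over the m nonempty pages, |E(H)| + 3m <= 2 sum_p |V_p|,
   while sum_p |V_p| is at most k |V(H)| in a k-local embedding (each vertex
   lies on at most k pages) and at most m |V(H)|; either m >= k or m < k then
   gives |E(H)| <= k (2 |V(H)| - 3). *)

From mathcomp Require Import all_boot all_order all_algebra.
From mathcomp Require Import zify.
From Stdlib Require Import ClassicalEpsilon.
Import Order.TTheory GRing.Theory Num.Theory.

Set Implicit Arguments.
Unset Strict Implicit.
Unset Printing Implicit Defensive.

Definition ends (T : finType) (S : {set T * T}) : {set T} :=
  [set a.1 | a in S] :|: [set a.2 | a in S].

Lemma endsP (T : finType) (S : {set T * T}) x :
  reflect (exists2 a, a \in S & (a.1 = x) \/ (a.2 = x)) (x \in ends S).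
Proof.
apply: (iffP setUP) => [[] /imsetP [a aS ->] | [a aS [<- | <-]]].
- by exists a; [|left].
- by exists a; [|right].
- by left; apply: imset_f.
- by right; apply: imset_f.
Qed.

Lemma ends1 (T : finType) (S : {set T * T}) a : a \in S -> a.1 \in ends S.
Proof. by move=> aS; apply/endsP; exists a; [|left]. Qed.

Lemma ends2 (T : finType) (S : {set T * T}) a : a \in S -> a.2 \in ends S.
Proof. by move=> aS; apply/endsP; exists a; [|right]. Qed.

Lemma endsS (T : finType) (S S' : {set T * T}) :
  S \subset S' -> ends S \subset ends S'.
Proof. by move=> sSS'; rewrite setUSS ?imsetS. Qed.

Section NoncrossingArcs.

Variables (T : finType) (ord : T -> nat).
Hypothesis ord_inj : injective ord.
Variable S : {set T * T}.
Hypothesis S_arcs : {in S, forall a, ord a.1 < ord a.2}.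
Hypothesis S_noncrossing : {in S &, forall a b, ~~ crosses ord a.1 a.2 b.1 b.2}.
Hypothesis S_neq0 : S != set0.

Lemma ends_max : exists2 x, x \in ends S & {in S, forall a, ord a.2 <= ord x}.
Proof.
have [a0 a0S] := set0Pn _ S_neq0.
case: (arg_maxnP ord (ends1 a0S)) => x xS x_max.
by exists x => // a aS; apply/x_max/ends2.
Qed.

Lemma ends_min : exists2 x, x \in ends S & {in S, forall a, ord x <= ord a.1}.
Proof.
have [a0 a0S] := set0Pn _ S_neq0.
case: (arg_minnP ord (ends1 a0S)) => x xS x_min.
by exists x => // a aS; apply/x_min/ends1.
Qed.

Definition longest_arcs : {set T * T} :=
  [set a in S | [forall b in S, (b.1 == a.1) ==> (ord b.2 <= ord a.2)]].

Lemma longer_arc a : a \in S :\: longest_arcs ->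
  exists2 b, b \in S & b.1 = a.1 /\ ord a.2 < ord b.2.
Proof.
case/setDP => aS; rewrite inE aS negb_forall_in => /existsP [b /andP [bS]].
by rewrite negb_imply -ltnNge => /andP [/eqP b1 lt]; exists b.
Qed.

Lemma card_longest_arcs : #|longest_arcs| < #|ends S|.
Proof.
have [xmax xmaxS x_max] := ends_max.
have fst_inj : {in longest_arcs &, injective fst}.
  move=> [a1 a2] [b1 b2]; rewrite !inE /= => /andP [aS /forall_inP a_max].
  move=> /andP [bS /forall_inP b_max] eq1; subst b1.
  have := implyP (a_max _ bS); have := implyP (b_max _ aS); rewrite /= eqxx.
  move=> /(_ isT) ab /(_ isT) ba.
  by rewrite (ord_inj (_ : ord a2 = ord b2)) //; lia.
rewrite -(card_in_imset fst_inj) (cardsD1 xmax (ends S)) xmaxS ltnS.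
apply/subset_leq_card/subsetP => _ /imsetP [a /setIdP [aS _] ->].
rewrite in_setD1 ends1 // andbT; apply: contraTneq isT => a1_max.
by have := S_arcs aS; have := x_max a aS; rewrite -a1_max; lia.
Qed.

Lemma card_shorter_arcs : #|S :\: longest_arcs| + 2 <= #|ends S|.
Proof.
have [xmax xmaxS x_max] := ends_max.
have [xmin xminS x_min] := ends_min.
have [a0 a0S] := set0Pn _ S_neq0.
have min_neq_max : xmin != xmax.
  apply: contraTneq isT => eqx.
  have := S_arcs a0S; have := x_min a0 a0S; have := x_max a0 a0S.
  by rewrite eqx; lia.
have shorter_right a b : a \in S :\: longest_arcs -> b \in S :\: longest_arcs ->
    a.2 = b.2 -> ord b.1 <= ord a.1.
  move=> aS' bS' eq2; rewrite leqNgt; apply/negP => lt1.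
  have [c cS [c1 lt2]] := longer_arc bS'.
  have aS : a \in S by case/setDP: aS'.
  have bS : b \in S by case/setDP: bS'.
  (* a.1 < b.1 = c.1 < a.2 = b.2 < c.2 *)
  have := S_noncrossing aS cS; rewrite /crosses c1 eq2 lt1 S_arcs //= lt2.
  by rewrite -eq2.
have snd_inj : {in S :\: longest_arcs &, injective snd}.
  move=> a b aS' bS' eq2.
  have := shorter_right _ _ aS' bS' eq2.
  have := shorter_right _ _ bS' aS' (esym eq2).
  case: a b eq2 {aS' bS'} => [a1 a2] [b1 b2] /= -> ba ab.
  by rewrite (ord_inj (_ : ord a1 = ord b1)) //; lia.
rewrite (cardsD1 xmax (ends S)) (cardsD1 xmin (ends S :\ xmax)) xmaxS.
rewrite in_setD1 min_neq_max xminS -(card_in_imset snd_inj) addnC leq_add2l.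
apply/subset_leq_card/subsetP => _ /imsetP [a aS' ->].
have [c cS [_ lt2]] := longer_arc aS'.
have aS : a \in S by case/setDP: aS'.
rewrite !in_setD1 ends2 // !andbT; apply/andP; split.
  apply: contraTneq isT => a2_min.
  by have := S_arcs aS; have := x_min a aS; rewrite -a2_min; lia.
by apply: contraTneq isT => a2_max; have := x_max c cS; rewrite -a2_max; lia.
Qed.

Lemma card_noncrossing_arcs : #|S| + 3 <= 2 * #|ends S|.
Proof.
have longest_sub : longest_arcs \subset S by apply/subsetP => a /setIdP [].
rewrite -(cardsID longest_arcs S) (setIidPr longest_sub).
by have := card_longest_arcs; have := card_shorter_arcs; lia.
Qed.

End NoncrossingArcs.

Section PageCounting.

Variables (T : finType) (ord : T -> nat).
Hypothesis ord_inj : injective ord.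
Variables (D : {set T * T}) (P : {set {set T * T}}) (W : {set T}) (k : nat).
Hypothesis P_partition : partition P D.
Hypothesis D_arcs : {in D, forall a, ord a.1 < ord a.2}.
Hypothesis P_noncrossing :
  {in P, forall A : {set T * T},
    {in A &, forall a b, ~~ crosses ord a.1 a.2 b.1 b.2}}.
Hypothesis ends_D : ends D \subset W.
Hypothesis P_local : forall x, #|[set A in P | x \in ends A]| <= k.

Lemma ends_block_subset A : A \in P -> ends A \subset W.
Proof.
case/and3P: P_partition => /eqP coverP _ _ AP.
by apply: subset_trans ends_D; apply: endsS; rewrite -coverP; apply: bigcup_sup.
Qed.

Lemma sum_card_ends_le_blocks : \sum_(A in P) #|ends A| <= #|W| * #|P|.
Proof.
rewrite mulnC -sum_nat_const; apply: leq_sum => A AP.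
exact/subset_leq_card/ends_block_subset.
Qed.

Lemma sum_card_ends_le_local : \sum_(A in P) #|ends A| <= #|W| * k.
Proof.
under eq_bigr do rewrite -sum1_card.
rewrite (exchange_big_dep (mem W)) /=; last first.
  by move=> A x AP; apply: (subsetP (ends_block_subset AP)).
rewrite -sum_nat_const; apply: leq_sum => x _.
by rewrite sum1dep_card.
Qed.

Lemma card_partitioned_noncrossing_arcs : #|D| <= k * (2 * #|W| - 3).
Proof.
case/and3P: (P_partition) => /eqP coverP _ P_neq0.
have block_bound : #|D| + 3 * #|P| <= 2 * \sum_(A in P) #|ends A|.
  rewrite (card_partition P_partition) -sum1_card big_distrr -big_split /=.
  rewrite big_distrr /=; apply: leq_sum => A AP.
  rewrite muln1 (card_noncrossing_arcs ord_inj) //.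
  - by move=> a aA; apply: D_arcs; rewrite -coverP; apply/bigcupP; exists A.
  - exact: P_noncrossing.
  - by apply: contraNneq P_neq0 => <-.
have := sum_card_ends_le_blocks; have := sum_card_ends_le_local.
by case: (leqP #|P| k) => _; nia.
Qed.

End PageCounting.

Lemma mem_pages_at (T : finType) (e : rel T) (pg : T -> T -> nat) v w :
  e v w -> pg v w \in pages_at e pg v.
Proof. by move=> evw; rewrite mem_undup map_f // mem_filter evw mem_enum. Qed.

Section BookEmbedding.

Variables (T : finType) (e : rel T) (ord : T -> nat) (pg : T -> T -> nat).
Hypothesis e_sym : symmetric e.
Hypothesis emb : is_book_embedding e ord pg.
Variable D : {set T * T}.
Hypothesis D_edges : {in D, forall a, e a.1 a.2}.
Hypothesis D_arcs : {in D, forall a, ord a.1 < ord a.2}.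

Definition page_of (a : T * T) : nat := pg a.1 a.2.

Definition page_partition : {set {set T * T}} := preim_partition page_of D.

Lemma page_partition_noncrossing :
  {in page_partition, forall A : {set T * T},
    {in A &, forall a b, ~~ crosses ord a.1 a.2 b.1 b.2}}.
Proof.
case: emb => _ _ pg_cross _ /imsetP [c _ ->] a b.
rewrite !inE => /andP [aD /eqP ca] /andP [bD /eqP cb]; apply/negP => ab.
have := pg_cross _ _ _ _ (D_edges aD) (D_edges bD) (D_arcs aD) (D_arcs bD) ab.
by rewrite -/(page_of a) -/(page_of b) -ca -cb eqxx.
Qed.

Lemma card_blocks_at x :
  #|[set A in page_partition | x \in ends A]| <= size (pages_at e pg x).
Proof.
pose block p := [set b in D | p == page_of b].
rewrite -(size_map block); apply: leq_trans (card_size _).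
apply/subset_leq_card/subsetP => _ /setIdP [/imsetP [c _ ->] /endsP [a]].
rewrite inE => /andP [aD /eqP ca] xa.
apply/mapP; exists (page_of a); last by rewrite /block ca.
have [_ pg_sym _] := emb; have ea := D_edges aD.
case: xa => <-; first exact: mem_pages_at.
by rewrite /page_of pg_sym // mem_pages_at // e_sym.
Qed.

Lemma card_book_arcs (W : {set T}) (k : nat) :
  ends D \subset W -> (forall v, size (pages_at e pg v) <= k) ->
  #|D| <= k * (2 * #|W| - 3).
Proof.
have [ord_inj _ _] := emb => ends_D local.
have page_partitionP := preim_partitionP page_of D.
apply: (card_partitioned_noncrossing_arcs ord_inj page_partitionP) => //.
- exact: page_partition_noncrossing.
- by move=> x; apply: leq_trans (card_blocks_at x) (local x).
Qed.

End BookEmbedding.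

Lemma local_pnP (T : finType) (e : rel T) : is_k_local e (local_pn e).
Proof.
rewrite /local_pn; case: ex_minnP => k + _.
by rewrite /k_local_pred; case: excluded_middle_informative.
Qed.

Definition oriented_edges (T : finType) (e : rel T) (ord : T -> nat)
    (F : {set {set T}}) : {set T * T} :=
  [set a | [&& e a.1 a.2, ord a.1 < ord a.2 & [set a.1; a.2] \in F]].

Lemma card_le_oriented_edges (T : finType) (e : rel T) (ord : T -> nat)
    (F : {set {set T}}) :
  symmetric e -> irreflexive e -> injective ord -> F \subset edges e ->
  #|F| <= #|oriented_edges e ord F|.
Proof.
move=> e_sym e_irr ord_inj F_edges.
apply: leq_trans (leq_imset_card (fun a => [set a.1; a.2]) _).
apply/subset_leq_card/subsetP => f fF.
have /imsetP [p + f_p] := subsetP F_edges f fF; rewrite inE => ep.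
rewrite f_p in fF.
case: (ltngtP (ord p.1) (ord p.2)) => [lt | gt | /ord_inj eq].
- by apply/imsetP; exists p; rewrite // inE ep lt fF.
- apply/imsetP; exists (p.2, p.1); last by rewrite f_p setUC.
  by rewrite inE /= e_sym ep gt setUC fF.
- by move: ep; rewrite eq e_irr.
Qed.

Lemma ends_oriented_edges (T : finType) (e : rel T) (ord : T -> nat)
    (F : {set {set T}}) (W : {set T}) :
  (forall f, f \in F -> f \subset W) -> ends (oriented_edges e ord F) \subset W.
Proof.
move=> F_W; apply/subsetP => x /endsP [a]; rewrite inE => /and3P [_ _ aF] xa.
apply: (subsetP (F_W _ aF)).
by rewrite !inE; case: xa => ->; rewrite eqxx ?orbT.
Qed.

Theorem lemma1 (T : finType) (e : rel T)
    (e_sym : symmetric e) (e_irr : irreflexive e)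
    (W : {set T}) (F : {set {set T}})
    (HW : W != set0)
    (HF : F \subset edges e)
    (HFW : forall f, f \in F -> f \subset W) :
  ((#|F|%:R / ((2 * #|W|)%:R - 3)) <= (local_pn e)%:R :> rat)%R.
Proof.
have [ord [pg [emb local]]] := local_pnP e.
have [ord_inj _ _] := emb.
have [W_small | W_big] := leqP (2 * #|W|) 2.
  apply: (@le_trans _ _ 0%R); last exact: ler0n.
  rewrite mulr_ge0_le0 // invr_le0 subr_le0.
  by rewrite ler_nat; lia.
have card_F : #|F| <= local_pn e * (2 * #|W| - 3).
  apply: leq_trans (card_le_oriented_edges e_sym e_irr ord_inj HF) _.
  apply: (card_book_arcs e_sym emb) (ends_oriented_edges e ord HFW) local.
  - by move=> a; rewrite inE => /and3P [].
  - by move=> a; rewrite inE => /and3P [].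
have pos_den : 0 < 2 * #|W| - 3 by lia.
by rewrite ler_pdivrMr -(natrB _ W_big) ?ltr0n // -natrM ler_nat.
Qed.
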